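(* Let $d\in\mathbb Z^+$, $c>0$, and let $\boldsymbol\beta=(\beta_j)_{j\ge1}$ and $(\Upsilon_{\boldsymbol\nu,\boldsymbol\lambda})_{\boldsymbol\nu\in\mathscr F,\boldsymbol\lambda\in\mathbb Z^d}$ be sequences of non-negative reals such that $\Upsilon_{\boldsymbol\nu,\boldsymbol 0}=\delta_{\boldsymbol\nu,\boldsymbol 0}$; $\Upsilon_{\boldsymbol\nu,\boldsymbol\lambda}=0$ if $|\boldsymbol\nu|<|\boldsymbol\lambda|$ or if $\boldsymbol\lambda$ has a negative entry; and otherwise, for all $j\ge1$, $$\Upsilon_{\boldsymbol\nu+\boldsymbol e_j,\boldsymbol\lambda}\le\beta_j\sum_{k=0}^{\nu_j}c^{k+1}\binom{\nu_j}{k}\sum_{\ell\in\{1,\dots,d\}:\lambda_\ell>0}\Upsilon_{\boldsymbol\nu-k\boldsymbol e_j,\boldsymbol\lambda-\boldsymbol e_\ell}.$$ Then for all $\boldsymbol\nu\in\mathscr F$ and $\boldsymbol\lambda\in\mathbb N_0^d$, $$\Upsilon_{\boldsymbol\nu,\boldsymbol\lambda}\le c^{|\boldsymbol\nu|}\frac{|\boldsymbol\lambda|!}{\boldsymbol\lambda!}\sum_{\boldsymbol m\le\boldsymbol\nu,\,|\boldsymbol m|=|\boldsymbol\lambda|}\boldsymbol\beta^{\boldsymbol m}\prod_{i\ge1}S(\nu_i,m_i).$$ If the recursive inequality is an equality, so is the conclusion.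
   Context: $\mathscr F$ is the set of finitely supported multi-indices in $\mathbb N_0^{\mathbb N}$; $|\boldsymbol\nu|=\sum\nu_j$, $\boldsymbol\lambda!=\prod\lambda_\ell!$, $\boldsymbol\beta^{\boldsymbol m}=\prod\beta_j^{m_j}$, componentwise order; $\boldsymbol e_j$ denotes a unit multi-index (in $\mathscr F$ or in $\mathbb Z^d$ as appropriate); $\delta$ is the Kronecker delta. $S(n,m)=\frac1{m!}\sum_{j=0}^m(-1)^{m-j}\binom mj j^n$ (Stirling numbers of the second kind, $S(0,0)=1$). *)

From mathcomp Require Import all_boot all_order all_algebra.
From mathcomp Require Import reals.
Set Implicit Arguments. Unset Strict Implicit. Unset Printing Implicit Defensive.
Import Order.TTheory GRing.Theory Num.Theory.
Local Open Scope ring_scope.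

(* Multi-indices in F are functions nat -> nat with finite support.
   Coordinates are indexed from 0 (paper: from 1). *)
Definition supp_lt (N : nat) (nu : nat -> nat) : Prop :=
  forall j, (N <= j)%N -> nu j = 0%N.

Definition nabs (N : nat) (nu : nat -> nat) : nat := (\sum_(j < N) nu j)%N.

Definition zabs (d : nat) (lam : 'I_d -> int) : int := \sum_(l < d) lam l.

Definition stir (R : realType) (n m : nat) : R :=
  (m`!%:R)^-1 * \sum_(j < m.+1) ((-1) ^+ (m - j) * 'C(m, j)%:R * (j%:R) ^+ n).

Definition addE (nu : nat -> nat) (j : nat) : nat -> nat :=
  fun i => (nu i + (i == j))%N.
Definition subkE (nu : nat -> nat) (k j : nat) : nat -> nat :=
  fun i => (nu i - (i == j) * k)%N.
Definition zsubE (d : nat) (lam : 'I_d -> int) (l : 'I_d) : 'I_d -> int :=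
  fun i => lam i - (i == l)%:Z.

Definition rec_rhs (R : realType) (d : nat) (c : R) (beta : nat -> R)
  (U : (nat -> nat) -> ('I_d -> int) -> R) (nu : nat -> nat)
  (lam : 'I_d -> int) (j : nat) : R :=
  beta j * \sum_(k < (nu j).+1)
     (c ^+ k.+1 * 'C(nu j, k)%:R *
      \sum_(l < d | (0 < lam l)%R) U (subkE nu k j) (zsubE lam l)).

Definition concl_rhs (R : realType) (d : nat) (c : R) (beta : nat -> R)
  (N : nat) (nu : nat -> nat) (lam : 'I_d -> nat) : R :=
  c ^+ (nabs N nu) *
  ((\sum_(l < d) lam l)%N`!%:R / (\prod_(l < d) (lam l)`!)%N%:R) *
  \sum_(m : {ffun 'I_N -> 'I_(nabs N nu).+1} |
          [forall i, (m i <= nu i)%N] && ((\sum_(i < N) m i)%N == \sum_(l < d) lam l)%N)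
     \prod_(i < N) (beta i ^+ m i * stir R (nu i) (m i)).

From mathcomp Require Import all_boot all_order all_algebra.
From mathcomp Require Import reals ring zify.
From mathcomp Require boolp.
Import Order.TTheory GRing.Theory Num.Theory.
Local Open Scope ring_scope.
Set Implicit Arguments. Unset Strict Implicit. Unset Printing Implicit Defensive.

(* The sum over m in the conclusion is the coefficient of X^|lam| in the polynomial
   P_nu = prod_i Q_(nu_i) with Q_a = sum_b beta_i^b S(a, b) X^b, so the claimed bound is
   c^|nu| |lam|!/lam! [X^|lam|] P_nu.  The Stirling recurrence
   S(a+1, b+1) = sum_k C(a, k) S(a-k, b) reads Q_(a+1) = beta_i X sum_k C(a, k) Q_(a-k),
   and combined with the multinomial recurrence
   |lam|!/lam! = sum_(lam_l > 0) (|lam|-1)!/(lam-e_l)! it shows that this closed form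
   satisfies the recursion with equality, as well as the boundary conditions.  Since the
   recursion is monotone in Upsilon (c, beta >= 0), induction on |nu| gives the
   inequality, and the identity in the equality case. *)

Section Stirling.
Variable R : realType.

Lemma stir00 : stir R 0 0 = 1.
Proof. by rewrite /stir big_ord1 /= !expr0 invr1 !mul1r. Qed.

Lemma stirS0 n : stir R n.+1 0 = 0.
Proof. by rewrite /stir big_ord1 /= expr0n /= !mulr0. Qed.

Lemma stir0S m : stir R 0 m.+1 = 0.
Proof.
rewrite /stir; apply/eqP; rewrite mulf_eq0; apply/orP; right.
have := exprDn (-1 : R) 1 m.+1; rewrite addNr expr0n /= => binom_sum.
rewrite [X in _ == X]binom_sum; apply/eqP/eq_bigr => j _.
by rewrite expr1n expr0 !mulr1 mulr_natr.
Qed.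

(* Summing [j^i] against ['C(n, i)] gives [(j+1)^n], and the factor
   [(m+1)/(j+1)] turns ['C(m, j)] into ['C(m+1, j+1)]. *)
Lemma stirSS n m : stir R n.+1 m.+1 = \sum_(i < n.+1) 'C(n, i)%:R * stir R i m.
Proof.
rewrite /stir.
under [RHS]eq_bigr => i _ do rewrite mulrCA big_distrr /=.
rewrite -big_distrr /= exchange_big /= big_ord_recl /= expr0n /= mulr0 add0r.
rewrite factS natrM invfM -mulrA mulrCA; congr (_ * _).
rewrite big_distrr /=; apply: eq_bigr => j _; rewrite /bump /= add1n subSS.
have -> : \sum_(i < n.+1) 'C(n, i)%:R * ((-1) ^+ (m - j) * 'C(m, j)%:R * j%:R ^+ i)
   = (-1) ^+ (m - j) * 'C(m, j)%:R * (j.+1)%:R ^+ n :> R.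
  rewrite -natr1 addrC exprDn big_distrr /=; apply: eq_bigr => i _.
  by rewrite expr1n mul1r mulr_natl -mulrnAr.
have m1_neq0 : (m.+1%:R : R) != 0 by rewrite pnatr_eq0.
have j1_neq0 : (j.+1%:R : R) != 0 by rewrite pnatr_eq0.
have -> : 'C(m.+1, j.+1)%:R = (j.+1%:R)^-1 * (m.+1 * 'C(m, j))%:R :> R.
  by rewrite mul_bin_diag natrM mulrA mulVf ?mul1r.
rewrite exprS natrM; field.
by rewrite !(addrC 1) !natr1 m1_neq0 j1_neq0.
Qed.

Lemma stir_small n m : (n < m)%N -> stir R n m = 0.
Proof.
elim: n {-2}n (leqnn n) m => [|n IH] i lein m ltim.
  by move: lein ltim; rewrite leqn0 => /eqP ->; case: m => // m _; apply: stir0S.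
case: m ltim => // m ltim; case: i lein ltim => [|i] lein ltim; first exact: stir0S.
rewrite stirSS big1 // => k _; rewrite IH ?mulr0 //.
  by rewrite -ltnS (leq_trans (ltn_ord k)).
exact: leq_trans (ltn_ord k) ltim.
Qed.

Lemma stirSS_rev a b : stir R a.+1 b.+1 = \sum_(k < a.+1) 'C(a, k)%:R * stir R (a - k) b.
Proof.
rewrite stirSS (reindex_inj rev_ord_inj) /=; apply: eq_bigr => k _.
by rewrite subSS bin_sub // -ltnS.
Qed.

End Stirling.

Lemma coef_sum_scaleXn (R : nzRingType) M (f : nat -> R) n :
  (\sum_(b < M) f b *: 'X^b)`_n = if (n < M)%N then f n else 0.
Proof.
rewrite coef_sum (eq_bigr (fun b : 'I_M => if b == n :> nat then f b else 0)).
  by rewrite -big_mkcond /= big_ord1_eq.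
by move=> b _; rewrite coefZ coefXn eq_sym; case: eqP; rewrite ?mulr1 ?mulr0.
Qed.

Lemma prod_scaleXn (R : comNzRingType) (I : finType) (a : I -> R) (e : I -> nat) :
  \prod_i (a i *: 'X^(e i)) = (\prod_i a i) *: 'X^(\sum_i e i).
Proof.
under eq_bigr => i _ do rewrite -mul_polyC.
by rewrite big_split /= prodrXr -rmorph_prod mul_polyC.
Qed.

Section StirlingPolynomials.
Variables (R : realType) (beta : nat -> R).

Definition stir_poly (i a : nat) : {poly R} :=
  \sum_(b < a.+1) (beta i ^+ b * stir R a b) *: 'X^b.

Lemma coef_stir_poly i a b : (stir_poly i a)`_b = beta i ^+ b * stir R a b.
Proof.
rewrite (coef_sum_scaleXn _ (fun b => beta i ^+ b * stir R a b)); case: ltnP => // lt_ab.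
by rewrite stir_small ?mulr0.
Qed.

Lemma stir_polyS i a :
  stir_poly i a.+1 = beta i *: ('X * \sum_(k < a.+1) 'C(a, k)%:R *: stir_poly i (a - k)).
Proof.
apply/polyP => b; rewrite coefZ coefXM coef_stir_poly.
case: b => [|b] /=; first by rewrite stirS0 !mulr0.
rewrite coef_sum stirSS_rev !big_distrr /=.
by apply: eq_bigr => k _; rewrite coefZ coef_stir_poly exprS; ring.
Qed.

End StirlingPolynomials.

Lemma nabs_addE N nu j : (j < N)%N -> nabs N (addE nu j) = (nabs N nu).+1.
Proof.
move=> ltjN; rewrite /nabs /addE big_split /= -addn1; congr (_ + _)%N.
rewrite (bigD1 (Ordinal ltjN)) //= eqxx big1 // => i neq_ij.
by case: eqP => // eq_ij; case/eqP: neq_ij; apply: val_inj.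
Qed.

Lemma nabs_subkE N nu k j : (j < N)%N -> (k <= nu j)%N ->
  nabs N (subkE nu k j) = (nabs N nu - k)%N.
Proof.
move=> ltjN le_k; rewrite /nabs (bigD1 (Ordinal ltjN)) //= [in RHS](bigD1 (Ordinal ltjN)) //=.
rewrite /subkE eqxx mul1n.
rewrite (eq_bigr (fun i : 'I_N => nu i)) ?addnBAC // => i neq_ij.
by case: eqP => [eq_ij|]; [case/eqP: neq_ij; apply: val_inj | rewrite mul0n subn0].
Qed.

Lemma supp_subkE N nu k j : supp_lt N nu -> supp_lt N (subkE nu k j).
Proof. by move=> suppN i leNi; rewrite /subkE suppN. Qed.

Lemma leq_nabs N nu j : (j < N)%N -> (nu j <= nabs N nu)%N.
Proof. by move=> ltjN; rewrite /nabs (bigD1 (Ordinal ltjN)) //= leq_addr. Qed.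

Lemma nabs_eq0 N nu : supp_lt N nu -> nabs N nu = 0%N -> nu = (fun _ => 0%N).
Proof.
move=> suppN nu0; apply: boolp.funext => x; case: (ltnP x N) => ltxN; last exact: suppN.
by apply/eqP; rewrite -leqn0 -nu0 (leq_nabs _ ltxN).
Qed.

Lemma nabs_eqS N nu n : supp_lt N nu -> nabs N nu = n.+1 ->
  exists j, [/\ (j < N)%N, (0 < nu j)%N, nu = addE (subkE nu 1 j) j &
                nabs N (subkE nu 1 j) = n].
Proof.
move=> suppN nuS; have : (\sum_(i < N) nu i != 0)%N by rewrite -/(nabs N nu) nuS.
rewrite sum_nat_eq0 => /forallPn [i] /=; rewrite -lt0n => nu_i_gt0.
exists i; split => //; last by rewrite nabs_subkE // nuS subn1.
apply: boolp.funext => x; rewrite /addE /subkE.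
by case: eqP => [->|_]; rewrite ?mul1n ?addn1 ?subn1 ?prednK // mul0n subn0 addn0.
Qed.

Section StirlingProduct.
Variables (R : realType) (beta : nat -> R) (N : nat).

Definition stir_prod (nu : nat -> nat) : {poly R} := \prod_(i < N) stir_poly beta i (nu i).

Lemma stir_prod0 : stir_prod (fun _ => 0%N) = 1.
Proof.
rewrite /stir_prod big1 // => i _.
by rewrite /stir_poly big_ord1 /= stir00 expr0 mulr1 scale1r expr0.
Qed.

Lemma stir_prod_addE nu j : (j < N)%N ->
  stir_prod (addE nu j) =
  beta j *: ('X * \sum_(k < (nu j).+1) 'C(nu j, k)%:R *: stir_prod (subkE nu k j)).
Proof.
move=> ltjN; pose j' := Ordinal ltjN.
have off_j f : (forall i, i != j -> f i = nu i) ->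
    \prod_(i < N | i != j') stir_poly beta i (f i) =
    \prod_(i < N | i != j') stir_poly beta i (nu i).
  by move=> eq_f; apply: eq_bigr => i neq_ij; rewrite eq_f.
rewrite /stir_prod (bigD1 j') //= off_j; last first.
  by move=> i /negbTE neq_ij; rewrite /addE neq_ij addn0.
rewrite /addE eqxx addn1 stir_polyS -scalerAl -mulrA big_distrl /=.
congr (_ *: (_ * _)); apply: eq_bigr => k _.
rewrite [in RHS](bigD1 j') // (off_j (subkE nu k j)); last first.
  by move=> i /negbTE neq_ij; rewrite /subkE neq_ij mul0n subn0.
by rewrite /subkE eqxx mul1n -scalerAl.
Qed.

Lemma coef0_stir_prod_addE nu j : (j < N)%N -> (stir_prod (addE nu j))`_0 = 0.
Proof. by move=> ltjN; rewrite stir_prod_addE // coefZ coefXM mulr0. Qed.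

Lemma coefS_stir_prod_addE nu j n : (j < N)%N ->
  (stir_prod (addE nu j))`_n.+1 =
  beta j * \sum_(k < (nu j).+1) 'C(nu j, k)%:R * (stir_prod (subkE nu k j))`_n.
Proof.
move=> ltjN; rewrite stir_prod_addE // coefZ coefXM /= coef_sum.
by congr (_ * _); apply: eq_bigr => k _; rewrite coefZ.
Qed.

Lemma coef_stir_prod_gt nu s : supp_lt N nu -> (nabs N nu < s)%N -> (stir_prod nu)`_s = 0.
Proof.
move: {2}(nabs N nu) (erefl (nabs N nu)) => n.
elim/ltn_ind: n nu s => -[|n] IH nu s nun suppN lt_ns.
  by rewrite (nabs_eq0 suppN nun) stir_prod0 coefC; case: s lt_ns.
have [j [ltjN _ nuE nu1n]] := nabs_eqS suppN nun.
case: s lt_ns => // s lt_ns; rewrite nuE coefS_stir_prod_addE // big1 ?mulr0 // => -[k ltk] _ /=.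
have lek : (k <= subkE nu 1 j j)%N by rewrite -ltnS.
rewrite (IH (n - k)%N) ?mulr0 //; first lia.
- by rewrite nabs_subkE // nu1n.
- by do 2 apply: supp_subkE.
- rewrite nabs_subkE // nu1n; lia.
Qed.

Lemma coef_stir_prod nu s :
  \sum_(m : {ffun 'I_N -> 'I_(nabs N nu).+1} |
          [forall i, (m i <= nu i)%N] && ((\sum_(i < N) m i)%N == s))
     \prod_(i < N) (beta i ^+ m i * stir R (nu i) (m i)) = (stir_prod nu)`_s.
Proof.
have stir_polyE (i : 'I_N) : stir_poly beta i (nu i) =
    \sum_(b < (nabs N nu).+1) (beta i ^+ b * stir R (nu i) b) *: 'X^b.
  apply/polyP => n; rewrite coef_stir_poly.
  rewrite (coef_sum_scaleXn _ (fun b => beta i ^+ b * stir R (nu i) b)).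
  case: ltnP => // le_n; rewrite stir_small ?mulr0 //.
  exact: leq_ltn_trans (leq_nabs nu (ltn_ord i)) le_n.
rewrite /stir_prod (eq_bigr _ (fun i _ => stir_polyE i)) bigA_distr_bigA /= coef_sum.
rewrite big_mkcond /=; apply: eq_bigr => m _.
rewrite prod_scaleXn coefZ coefXn.
case: (boolP [forall i, (m i <= nu i)%N]) => [_|/forallPn [i]] /=.
  by rewrite eq_sym; case: eqP; rewrite ?mulr1 ?mulr0.
rewrite -ltnNge => lt_nu_m; case: eqP; rewrite ?mulr0 // => _.
by rewrite (bigD1 i) //= stir_small // mulr0 !mul0r.
Qed.

End StirlingProduct.

Definition nsubE d (lam : 'I_d -> nat) (l : 'I_d) : 'I_d -> nat :=
  fun i => (lam i - (i == l))%N.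

Lemma zsubE_nat d (lam : 'I_d -> nat) l : (0 < lam l)%N ->
  zsubE (fun i => (lam i)%:Z) l = (fun i => (nsubE lam l i)%:Z).
Proof.
move=> lam_l_gt0; apply: boolp.funext => i; rewrite /zsubE /nsubE subzn //.
by case: eqP => // ->.
Qed.

Lemma zabs_nat d (lam : 'I_d -> nat) :
  zabs (fun l => (lam l)%:Z) = (\sum_(l < d) lam l)%N%:Z.
Proof. by rewrite /zabs (big_morph Posz PoszD (erefl 0%Z)). Qed.

Lemma sum_nsubE d (lam : 'I_d -> nat) l : (0 < lam l)%N ->
  (\sum_(i < d) nsubE lam l i)%N = (\sum_(i < d) lam i).-1.
Proof.
move=> lam_l_gt0; rewrite (bigD1 l) //= [in RHS](bigD1 l) //= /nsubE eqxx.
rewrite (eq_bigr lam) => [|i /negbTE neq_il]; last by rewrite neq_il subn0.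
lia.
Qed.

Definition multinomial (R : numFieldType) d (lam : 'I_d -> nat) : R :=
  (\sum_(l < d) lam l)%N`!%:R / (\prod_(l < d) (lam l)`!)%N%:R.

Lemma multinomialS (R : numFieldType) d (lam : 'I_d -> nat) s :
  (\sum_(l < d) lam l)%N = s.+1 ->
  multinomial R lam = \sum_(l < d | (0 < lam l)%N) multinomial R (nsubE lam l).
Proof.
move=> lamS.
have prod_fact_nsubE l : (0 < lam l)%N ->
    (\prod_(i < d) (nsubE lam l i)`! * lam l = \prod_(i < d) (lam i)`!)%N.
  move=> lam_l_gt0; rewrite (bigD1 l) //= [in RHS](bigD1 l) //= /nsubE eqxx subn1.
  rewrite (eq_bigr (fun i => (lam i)`!)) => [|i /negbTE neq_il]; last first.
    by rewrite neq_il subn0.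
  rewrite mulnAC; congr (_ * _)%N.
  by case: (lam l) lam_l_gt0 => // a _; rewrite factS mulnC.
have prod_fact_neq0 (mu : 'I_d -> nat) : ((\prod_(i < d) (mu i)`!)%N%:R : R) != 0.
  by rewrite pnatr_eq0 -lt0n; apply: prodn_gt0 => i; apply: fact_gt0.
rewrite /multinomial lamS.
rewrite (eq_bigr (fun l => s`!%:R * (lam l)%:R / (\prod_(i < d) (lam i)`!)%N%:R)).
  rewrite -big_distrl -big_distrr /= -natr_sum.
  have -> : (\sum_(i < d | (0 < lam i)%N) lam i)%N = s.+1.
    rewrite -lamS [in RHS](bigID (fun i => (0 < lam i)%N)) /=.
    by rewrite [X in _ = (_ + X)%N]big1 ?addn0 // => i; rewrite lt0n negbK => /eqP.
  by rewrite factS natrM (mulrC s.+1%:R).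
move=> l lam_l_gt0; rewrite sum_nsubE // lamS /= -(prod_fact_nsubE l lam_l_gt0) natrM.
have lam_l_neq0 : ((lam l)%:R : R) != 0 by rewrite pnatr_eq0 -lt0n.
by field; rewrite lam_l_neq0 prod_fact_neq0.
Qed.

Section ConclusionRHS.
Variables (R : realType) (d : nat) (c : R) (beta : nat -> R) (N : nat).

Lemma concl_rhsE nu (lam : 'I_d -> nat) :
  concl_rhs c beta N nu lam =
  c ^+ nabs N nu * multinomial R lam * (stir_prod beta N nu)`_(\sum_(l < d) lam l)%N.
Proof. by rewrite /concl_rhs coef_stir_prod. Qed.

Lemma concl_rhs00 : concl_rhs c beta N (fun _ => 0%N) (fun _ : 'I_d => 0%N) = 1.
Proof.
rewrite concl_rhsE stir_prod0 coefC /multinomial /nabs !big1 //=.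
by rewrite expr0 !mul1r mulr1 invr1.
Qed.

Lemma concl_rhs_lam0 nu : supp_lt N nu -> nabs N nu <> 0%N ->
  concl_rhs c beta N nu (fun _ : 'I_d => 0%N) = 0.
Proof.
case nun: (nabs N nu) => [|n] suppN // _.
have [j [ltjN _ -> _]] := nabs_eqS suppN nun.
by rewrite concl_rhsE big1 // coef0_stir_prod_addE // mulr0.
Qed.

Lemma concl_rhs_gt nu (lam : 'I_d -> nat) : supp_lt N nu ->
  (nabs N nu < \sum_(l < d) lam l)%N -> concl_rhs c beta N nu lam = 0.
Proof. by move=> suppN lt_nu_lam; rewrite concl_rhsE coef_stir_prod_gt ?mulr0. Qed.

Lemma rec_rhs_concl nu j (lam : 'I_d -> nat) :
  (j < N)%N -> (0 < \sum_(l < d) lam l)%N ->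
  rec_rhs c beta (fun mu lz => concl_rhs c beta N mu (fun l => absz (lz l)))
     nu (fun l => (lam l)%:Z) j = concl_rhs c beta N (addE nu j) lam.
Proof.
move=> ltjN lam_gt0.
have [s lamS] : exists s, (\sum_(l < d) lam l)%N = s.+1.
  by exists (\sum_(l < d) lam l).-1; rewrite prednK.
rewrite /rec_rhs concl_rhsE nabs_addE // lamS coefS_stir_prod_addE //.
have inner (k : 'I_(nu j).+1) :
    \sum_(l < d | (0 < (lam l)%:Z)%R)
      concl_rhs c beta N (subkE nu k j) (fun i => absz (zsubE (fun l => (lam l)%:Z) l i))
    = c ^+ (nabs N nu - k) * (stir_prod beta N (subkE nu k j))`_s * multinomial R lam.
  have lek : (k <= nu j)%N by rewrite -ltnS ltn_ord.
  rewrite (multinomialS R lamS) big_distrr /=.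
  apply: eq_big => [l|l lam_l_gt0]; first by rewrite ltz_nat.
  rewrite ltz_nat in lam_l_gt0.
  rewrite zsubE_nat //= concl_rhsE nabs_subkE // sum_nsubE // lamS /=.
  by rewrite mulrAC.
under eq_bigr => k _ do rewrite inner.
have len : (nu j <= nabs N nu)%N := leq_nabs nu ltjN.
rewrite [RHS]mulrCA; congr (_ * _); rewrite big_distrr /=; apply: eq_bigr => k _.
have -> : c ^+ (nabs N nu).+1 = c ^+ k.+1 * c ^+ (nabs N nu - k).
  by rewrite -exprD; congr (_ ^+ _); have := ltn_ord k; lia.
ring.
Qed.

End ConclusionRHS.

Lemma ler_rec_rhs (R : realType) d (c : R) beta (U V : (nat -> nat) -> ('I_d -> int) -> R)
    nu (lam : 'I_d -> int) j :
  0 <= c -> 0 <= beta j ->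
  (forall k l, (k < (nu j).+1)%N -> (0 < lam l)%R ->
     U (subkE nu k j) (zsubE lam l) <= V (subkE nu k j) (zsubE lam l)) ->
  rec_rhs c beta U nu lam j <= rec_rhs c beta V nu lam j.
Proof.
move=> c_ge0 beta_j_ge0 leUV; rewrite /rec_rhs ler_wpM2l //.
apply: ler_sum => k _; rewrite ler_wpM2l ?mulr_ge0 ?exprn_ge0 //.
by apply: ler_sum => l; apply: leUV.
Qed.

Lemma eq_rec_rhs (R : realType) d (c : R) beta (U V : (nat -> nat) -> ('I_d -> int) -> R)
    nu (lam : 'I_d -> int) j :
  (forall k l, (k < (nu j).+1)%N -> (0 < lam l)%R ->
     U (subkE nu k j) (zsubE lam l) = V (subkE nu k j) (zsubE lam l)) ->
  rec_rhs c beta U nu lam j = rec_rhs c beta V nu lam j.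
Proof.
move=> eqUV; rewrite /rec_rhs; congr (_ * _); apply: eq_bigr => k _.
by congr (_ * _); apply: eq_bigr => l; apply: eqUV.
Qed.

(* Both claims of the theorem are instances of one induction on [|nu|], for a
   relation [r] that is a preorder and is preserved by [rec_rhs]. *)
Section Induction.
Variables (R : realType) (d : nat) (c : R) (beta : nat -> R).
Variables (U : (nat -> nat) -> ('I_d -> int) -> R) (N : nat) (r : R -> R -> Prop).
Hypothesis r_refl : forall x, r x x.
Hypothesis r_trans : forall x y z, r x y -> r y z -> r x z.
Hypothesis r_rec_rhs : forall nu (lam : 'I_d -> int) j V,
  (forall k l, (k < (nu j).+1)%N -> (0 < lam l)%R ->
     r (U (subkE nu k j) (zsubE lam l)) (V (subkE nu k j) (zsubE lam l))) ->
  r (rec_rhs c beta U nu lam j) (rec_rhs c beta V nu lam j).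
Hypothesis U00 : U (fun _ => 0%N) (fun _ => 0%Z) = 1.
Hypothesis U_lam0 : forall nu, supp_lt N nu -> (exists j, nu j <> 0%N) ->
  U nu (fun _ => 0%Z) = 0.
Hypothesis U_gt : forall nu lam, supp_lt N nu -> ((nabs N nu)%:Z < zabs lam)%R ->
  U nu lam = 0.
Hypothesis U_rec : forall nu (lam : 'I_d -> int) j, supp_lt N nu ->
  (forall l, (0 <= lam l)%R) -> (exists l, lam l <> 0%Z) ->
  (zabs lam <= (nabs N nu).+1%:Z)%R ->
  r (U (addE nu j) lam) (rec_rhs c beta U nu lam j).

Lemma r_U_concl_rhs nu (lam : 'I_d -> nat) : supp_lt N nu ->
  r (U nu (fun l => (lam l)%:Z)) (concl_rhs c beta N nu lam).
Proof.
move: {2}(nabs N nu) (erefl (nabs N nu)) => n.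
elim/ltn_ind: n nu lam => n IH nu lam nun suppN.
have [lam0|/forallPn [l0 lam_l0]] := boolP [forall l, lam l == 0%N].
  have -> : lam = (fun _ => 0%N) by apply: boolp.funext => l; apply/eqP/(forallP lam0).
  case: n IH nun => [|n] _ nun.
    by rewrite (nabs_eq0 suppN nun) U00 concl_rhs00; apply: r_refl.
  have [j [_ nu_j_gt0 _ _]] := nabs_eqS suppN nun.
  rewrite U_lam0 //; last by exists j; apply/eqP; rewrite -lt0n.
  by rewrite concl_rhs_lam0 ?nun //; apply: r_refl.
have lam_gt0 : (0 < \sum_(l < d) lam l)%N by rewrite (bigD1 l0) //= ltn_addr // lt0n.
have [lt_nu_lam|le_lam_nu] := ltnP n (\sum_(l < d) lam l).
  rewrite U_gt ?zabs_nat ?nun ?ltz_nat // concl_rhs_gt ?nun //; apply: r_refl.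
case: n IH nun le_lam_nu => [|n] IH nun le_lam_nu; first lia.
have [j [ltjN _ nuE nu1n]] := nabs_eqS suppN nun.
rewrite nuE.
apply: r_trans (U_rec (lam := fun l => (lam l)%:Z) j (supp_subkE 1 j suppN) _ _ _) _.
- by [].
- by exists l0; apply/eqP; rewrite eqz_nat.
- by rewrite zabs_nat nu1n lez_nat.
apply: r_trans (r_rec_rhs (V := fun mu lz => concl_rhs c beta N mu (fun l => absz (lz l))) _) _.
  move=> k l ltk; rewrite ltz_nat => lam_l_gt0; rewrite zsubE_nat //.
  have lek : (k <= subkE nu 1 j j)%N by rewrite -ltnS.
  apply: (IH (n - k)%N); first lia.
  - by rewrite nabs_subkE // nu1n.
  - by do 2 apply: supp_subkE.
by rewrite rec_rhs_concl //; apply: r_refl.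
Qed.

End Induction.

Theorem lemmaA4 (R : realType) (d : nat) (c : R) (beta : nat -> R)
  (U : (nat -> nat) -> ('I_d -> int) -> R) :
  (0 < d)%N -> 0 < c ->
  (forall j, 0 <= beta j) ->
  (forall N nu lam, supp_lt N nu -> 0 <= U nu lam) ->
  (* Upsilon_{nu,0} = delta_{nu,0} *)
  U (fun _ => 0%N) (fun _ => 0%Z) = 1 ->
  (forall N nu, supp_lt N nu -> (exists j, nu j <> 0%N) -> U nu (fun _ => 0%Z) = 0) ->
  (* vanishing conditions *)
  (forall N nu lam, supp_lt N nu -> ((nabs N nu)%:Z < zabs lam)%R -> U nu lam = 0) ->
  (forall N nu lam, supp_lt N nu -> (exists l, (lam l < 0)%R) -> U nu lam = 0) ->
  ((* the recursive inequality, in the remaining cases *)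
   (forall N nu (lam : 'I_d -> int) j, supp_lt N nu ->
      (forall l, (0 <= lam l)%R) -> (exists l, lam l <> 0%Z) ->
      (zabs lam <= (nabs N nu).+1%:Z)%R ->
      U (addE nu j) lam <= rec_rhs c beta U nu lam j) ->
   forall N nu (lam : 'I_d -> nat), supp_lt N nu ->
      U nu (fun l => (lam l)%:Z) <= concl_rhs c beta N nu lam)
  /\
  ((* the equality case *)
   (forall N nu (lam : 'I_d -> int) j, supp_lt N nu ->
      (forall l, (0 <= lam l)%R) -> (exists l, lam l <> 0%Z) ->
      (zabs lam <= (nabs N nu).+1%:Z)%R ->
      U (addE nu j) lam = rec_rhs c beta U nu lam j) ->
   forall N nu (lam : 'I_d -> nat), supp_lt N nu ->
      U nu (fun l => (lam l)%:Z) = concl_rhs c beta N nu lam).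
Proof.
(* Only U at multi-indices lam >= 0 ever enters, so neither the sign of U nor its
   vanishing at lam with a negative entry is needed; nor is d > 0. *)
move=> _ c_gt0 beta_ge0 _ U00 U_lam0 U_gt _.
split => U_rec N nu lam suppN.
  apply: (r_U_concl_rhs (r := fun x y => x <= y)) => //.
  - by move=> x y z; apply: le_trans.
  - by move=> nu' lam' j V; apply: ler_rec_rhs (ltW c_gt0) (beta_ge0 j).
  - exact: U_lam0.
  - exact: U_gt.
  - exact: U_rec.
apply: (r_U_concl_rhs (r := eq)) => //.
- by move=> x y z ->.
- by move=> nu' lam' j V; apply: eq_rec_rhs.
- exact: U_lam0.
- exact: U_gt.
- exact: U_rec.
Qed.
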